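(* Let $M=(S,\mathrm{Act},P)$ be an MDP, $T\subseteq S$, $\mathrm{opt}\in\{\min,\max\}$, and let $r\in\mathbb{N}_\infty^S$ satisfy $D^{\overline{\mathrm{opt}}}(r)\le r$ (pointwise). Then for all $s\in S$: if $r(s)<\infty$ then $\Pr^{\mathrm{opt}}_s(\Diamond T)>0$.
   Context: An MDP is a tuple $M=(S,\mathrm{Act},P)$ with $S$ finite, $\mathrm{Act}$ finite, $P\colon S\times\mathrm{Act}\times S\to[0,1]$ with $\sum_{s'}P(s,a,s')\in\{0,1\}$; $\mathrm{Act}(s)=\{a\mid\sum_{s'}P(s,a,s')=1\}$ is nonempty for all $s$; $\mathrm{Post}(s,a)=\{s'\mid P(s,a,s')>0\}$. A strategy is $\sigma\colon S\to\mathrm{Act}$ with $\sigma(s)\in\mathrm{Act}(s)$, inducing a Markov chain with transitions $P(s,\sigma(s),\cdot)$; $\Pr^\sigma_s(\Diamond T)$ is the probability of visiting $T$ from $s$, and $\Pr^{\mathrm{opt}}_s(\Diamond T)=\mathrm{opt}_\sigma\Pr^\sigma_s(\Diamond T)$. $\overline{\min}=\max$, $\overline{\max}=\min$. $\mathbb{N}_\infty=\mathbb{N}\cup\{\infty\}$ with $1+\infty=\infty$. For $\mathrm{opt}'\in\{\min,\max\}$ the distance operator $D^{\mathrm{opt}'}\colon\mathbb{N}_\infty^S\to\mathbb{N}_\infty^S$ is $D^{\mathrm{opt}'}(r)(s)=0$ for $s\in T$ and $1+\mathrm{opt}'_{a\in\mathrm{Act}(s)}\min_{s'\in\mathrm{Post}(s,a)}r(s')$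 for $s\notin T$. *)

From HB Require Import structures.
From mathcomp Require Import all_boot all_order all_algebra.
From mathcomp Require Import classical_sets reals.
Set Implicit Arguments. Unset Strict Implicit. Unset Printing Implicit Defensive.
Import Order.TTheory GRing.Theory Num.Theory.
Local Open Scope classical_set_scope.
Local Open Scope ring_scope.

Section MDP.
Variables (R : realType) (S Act : finType) (P : S -> Act -> S -> R).

Definition enabled (s : S) : pred Act := fun a => \sum_(s' : S) P s a s' == 1.
Definition post (s : S) (a : Act) : pred S := fun s' => 0 < P s a s'.

Definition is_MDP : Prop :=
  (forall s a s', 0 <= P s a s' <= 1) /\
  (forall s a, \sum_(s' : S) P s a s' = 0 \/ \sum_(s' : S) P s a s' = 1) /\
  (forall s, exists a, enabled s a).

Definition strategy (sigma : S -> Act) : Prop := forall s, enabled s (sigma s).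

Fixpoint reach_le (T : {set S}) (sigma : S -> Act) (n : nat) (s : S) : R :=
  if s \in T then 1 else
  match n with
  | 0 => 0
  | n'.+1 => \sum_(s' : S) P s (sigma s) s' * reach_le T sigma n' s'
  end.

Definition reach_prob (T : {set S}) (sigma : S -> Act) (s : S) : R :=
  sup (range (fun n => reach_le T sigma n s)).

End MDP.

Inductive opt_t := Min | Max.
Definition opt_dual (o : opt_t) : opt_t := if o is Min then Max else Min.

Definition opt_reach_prob (R : realType) (S Act : finType) (P : S -> Act -> S -> R)
    (o : opt_t) (T : {set S}) (s : S) : R :=
  let vals := [set reach_prob P T sigma s | sigma in [set sigma | strategy P sigma]] in
  if o is Min then inf vals else sup vals.

(* ---------- N_infty = nat + {infty}, represented as option nat (None = infty) ---------- *)
Definition ninf := option nat.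
Definition ninf_le (x y : ninf) : bool :=
  match x, y with
  | _, None => true
  | None, Some _ => false
  | Some m, Some n => (m <= n)%N
  end.
Definition ninf_min (x y : ninf) : ninf := if ninf_le x y then x else y.
Definition ninf_max (x y : ninf) : ninf := if ninf_le x y then y else x.
Definition ninf_succ (x : ninf) : ninf := if x is Some n then Some n.+1 else None.
(* infty is the neutral element of min, 0 that of max *)
Definition ninf_opt (o : opt_t) : ninf -> ninf -> ninf :=
  if o is Min then ninf_min else ninf_max.
Definition ninf_opt_idx (o : opt_t) : ninf := if o is Min then None else Some 0%N.

Definition dist_op (R : realType) (S Act : finType) (P : S -> Act -> S -> R)
    (T : {set S}) (o' : opt_t) (r : S -> ninf) (s : S) : ninf :=
  if s \in T then Some 0%N
  else ninf_succ (\big[ninf_opt o' / ninf_opt_idx o']_(a | enabled P s a)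
                    \big[ninf_min / None]_(s' | post P s a s') r s').

(* The bound D^{dual opt}(r) <= r makes r a ranking function: from a state s
   outside T with r(s) = m < oo, the chosen action (every enabled action if
   opt = min, some enabled action if opt = max) has a successor of rank < m.
   Following such successors reaches T within m steps, each step taken with
   probability at least the least positive transition probability p. Hence
   Pr^sigma_s(<> T) >= p^m, uniformly over all strategies when opt = min, and
   for a strategy choosing descending actions when opt = max. *)
From mathcomp Require Import all_boot all_order all_algebra.
From mathcomp Require Import classical_sets reals.
Set Implicit Arguments. Unset Strict Implicit. Unset Printing Implicit Defensive.
Import Order.TTheory GRing.Theory Num.Theory.
Local Open Scope ring_scope.

Lemma ninf_le_trans {x y z : ninf} : ninf_le x y -> ninf_le y z -> ninf_le x z.
Proof. by case: x y z => [a|] [b|] [c|] //=; apply: leq_trans. Qed.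

Lemma ninf_le_succ x y : ninf_le x y -> ninf_le (ninf_succ x) (ninf_succ y).
Proof. by case: x y => [a|] [b|]. Qed.

Lemma ninf_le_maxl x y : ninf_le x (ninf_max x y).
Proof. by case: x y => [a|] [b|] //=; rewrite /ninf_max /=; case: leqP. Qed.

Lemma ninf_le_maxr x y : ninf_le y (ninf_max x y).
Proof.
by case: x y => [a|] [b|] //=; rewrite /ninf_max /=; case: leqP => // /ltnW.
Qed.

Lemma ninf_le_bigmax {I : finType} (Pr : pred I) (F : I -> ninf) x0 i :
  Pr i -> ninf_le (F i) (\big[ninf_max/x0]_(j | Pr j) F j).
Proof.
move=> Pri; have := mem_index_enum i; elim: (index_enum I) => //= j js IH.
rewrite inE big_cons => /predU1P[<-|/IH le_Fi]; first by rewrite Pri ninf_le_maxl.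
by case: (Pr j) => //; apply: ninf_le_trans le_Fi (ninf_le_maxr _ _).
Qed.

Lemma ninf_bigmin_attained {I : finType} (Pr : pred I) (F : I -> ninf) :
  let m := \big[ninf_min/None]_(i | Pr i) F i in
  m = None \/ exists2 i, Pr i & F i = m.
Proof.
apply: (big_ind (fun m => m = None \/ exists2 i, Pr i & F i = m)); first by left.
  by move=> x y hx hy; rewrite /ninf_min; case: ifP.
by move=> i Pri; right; exists i.
Qed.

Section Reachability.
Variables (R : realType) (S Act : finType) (P : S -> Act -> S -> R).
Hypothesis hP : is_MDP P.

Lemma prob_ge0 s a s' : 0 <= P s a s'.
Proof. by case: hP => bounds _; case/andP: (bounds s a s'). Qed.

Lemma strategy_exists : exists sigma, strategy P sigma.
Proof.
have [_ [_ has_enabled]] := hP.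
by exists (fun s => xchoose (has_enabled s)) => s; apply: xchooseP.
Qed.

Definition min_pos_prob : R :=
  \big[Num.min/1]_(x : S * Act * S | 0 < P x.1.1 x.1.2 x.2) P x.1.1 x.1.2 x.2.

Lemma min_pos_prob_gt0 : 0 < min_pos_prob.
Proof.
apply: (big_ind (fun x : R => 0 < x)) => // x y x_gt0 y_gt0.
by rewrite lt_min x_gt0.
Qed.

Lemma min_pos_prob_le1 : min_pos_prob <= 1.
Proof. exact: bigmin_le_id. Qed.

Lemma min_pos_prob_le s a s' : 0 < P s a s' -> min_pos_prob <= P s a s'.
Proof. exact: (@bigmin_le_cond _ _ _ _ (s, a, s')). Qed.

Variable T : {set S}.

Lemma reach_le_ge0 sigma n s : 0 <= reach_le P T sigma n s.
Proof.
elim: n s => [|n IH] s /=; case: ifP => // _.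
by apply: sumr_ge0 => s' _; rewrite mulr_ge0 ?prob_ge0.
Qed.

Lemma reach_le_le1 sigma n s : strategy P sigma -> reach_le P T sigma n s <= 1.
Proof.
move=> sigmaP; elim: n s => [|n IH] s /=; case: ifP => // _.
rewrite -(eqP (sigmaP s)); apply: ler_sum => s' _.
by rewrite ler_piMr ?prob_ge0.
Qed.

Lemma reach_le_le_prob sigma n s :
  strategy P sigma -> reach_le P T sigma n s <= reach_prob P T sigma s.
Proof.
move=> sigmaP; apply: ub_le_sup; last by exists n.
by exists 1 => _ [m _ <-]; apply: reach_le_le1.
Qed.

Lemma reach_prob_le1 sigma s : strategy P sigma -> reach_prob P T sigma s <= 1.
Proof.
move=> sigmaP; apply: ge_sup; first by exists (reach_le P T sigma 0 s), 0%N.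
by move=> _ [m _ <-]; apply: reach_le_le1.
Qed.

Variable r : S -> ninf.

Definition descends s a : bool :=
  [exists s', post P s a s' && ninf_le (ninf_succ (r s')) (r s)].

Definition descending (sigma : S -> Act) : Prop :=
  forall s, s \notin T -> r s != None -> descends s (sigma s).

Lemma descends_of_succ_bigmin s a : r s != None ->
  ninf_le (ninf_succ (\big[ninf_min/None]_(s' | post P s a s') r s')) (r s) ->
  descends s a.
Proof.
case: (ninf_bigmin_attained (post P s a) r) => [->|[s' s'_post <-] _ le_r].
  by case: (r s).
by apply/existsP; exists s'; rewrite s'_post.
Qed.

Lemma dist_le_Max_descends s : s \notin T -> r s != None ->
  ninf_le (dist_op P T Max r s) (r s) -> forall a, enabled P s a -> descends s a.
Proof.
rewrite /dist_op => /negbTE-> /= r_fin le_r a a_en.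
apply: descends_of_succ_bigmin => //.
apply: ninf_le_trans le_r; apply: ninf_le_succ; exact: ninf_le_bigmax.
Qed.

Lemma dist_le_Min_descends s : s \notin T -> r s != None ->
  ninf_le (dist_op P T Min r s) (r s) -> exists2 a, enabled P s a & descends s a.
Proof.
rewrite /dist_op => /negbTE-> /= r_fin.
case: (ninf_bigmin_attained (enabled P s)
         (fun a => \big[ninf_min/None]_(s' | post P s a s') r s')).
  by move=> ->; case: (r s) r_fin.
move=> [a a_en <-] le_r.
by exists a => //; apply: descends_of_succ_bigmin.
Qed.

Lemma dist_le_Max_descending sigma :
  (forall s, ninf_le (dist_op P T Max r s) (r s)) ->
  strategy P sigma -> descending sigma.
Proof.
move=> hD sigmaP s s_T r_fin.
exact: dist_le_Max_descends s_T r_fin (hD s) _ (sigmaP s).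
Qed.

Lemma descending_strategy_exists :
  (forall s, ninf_le (dist_op P T Min r s) (r s)) ->
  exists2 sigma, strategy P sigma & descending sigma.
Proof.
move=> hD; have [_ [_ has_enabled]] := hP.
pose good s a := enabled P s a && [|| s \in T, r s == None | descends s a].
have good_ex s : exists a, good s a.
  case: (boolP ((s \in T) || (r s == None))) => [trivial_s|/norP[s_T r_fin]].
    have [a a_en] := has_enabled s.
    by exists a; rewrite /good a_en orbA trivial_s.
  have [a a_en a_desc] := dist_le_Min_descends s_T r_fin (hD s).
  by exists a; rewrite /good a_en a_desc !orbT.
exists (fun s => xchoose (good_ex s)) => s.
  by case/andP: (xchooseP (good_ex s)).
move=> s_T r_fin; case/andP: (xchooseP (good_ex s)) => _.
by rewrite (negbTE s_T) (negbTE r_fin).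
Qed.

Lemma descending_step sigma s n : descending sigma -> s \notin T ->
  ninf_le (r s) (Some n) ->
  exists2 s', post P s (sigma s) s' & ninf_le (ninf_succ (r s')) (Some n).
Proof.
move=> sigma_desc s_T r_le; have r_fin : r s != None by case: (r s) r_le.
case/existsP: (sigma_desc s s_T r_fin) => s' /andP[s'_post le_r].
by exists s' => //; apply: ninf_le_trans le_r r_le.
Qed.

Lemma descending_reach_le_ge sigma n s : descending sigma ->
  ninf_le (r s) (Some n) -> min_pos_prob ^+ n <= reach_le P T sigma n s.
Proof.
move=> sigma_desc; have p_ge0 := ltW min_pos_prob_gt0.
elim: n s => [|n IH] s r_le /=; case: ifPn => s_T.
- by rewrite expr0.
- by have [s' _] := descending_step sigma_desc s_T r_le; case: (r s').
- by rewrite exprn_ile1 ?min_pos_prob_le1.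
have [s' s'_post le_r'] := descending_step sigma_desc s_T r_le.
have r'_le : ninf_le (r s') (Some n) by case: (r s') le_r'.
rewrite (bigD1 s') //= exprSr mulrC -[leLHS]addr0; apply: lerD; last first.
  by apply: sumr_ge0 => s'' _; rewrite mulr_ge0 ?prob_ge0 ?reach_le_ge0.
by rewrite ler_pM ?exprn_ge0 ?min_pos_prob_le ?IH.
Qed.

Lemma descending_reach_prob_ge sigma s m :
  strategy P sigma -> descending sigma -> r s = Some m ->
  min_pos_prob ^+ m <= reach_prob P T sigma s.
Proof.
move=> sigmaP sigma_desc r_s.
apply: le_trans (reach_le_le_prob m s sigmaP).
by apply: descending_reach_le_ge; rewrite // r_s /=.
Qed.

End Reachability.

Theorem proposition1 (R : realType) (S Act : finType) (P : S -> Act -> S -> R)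
  (hP : is_MDP P) (T : {set S}) (o : opt_t) (r : S -> ninf) :
  (forall s, ninf_le (dist_op P T (opt_dual o) r s) (r s)) ->
  forall s, r s <> None -> 0 < opt_reach_prob P o T s.
Proof.
move=> hD s; case r_s: (r s) => [m|] // _.
have bound_gt0 : 0 < min_pos_prob P ^+ m by rewrite exprn_gt0 ?min_pos_prob_gt0.
rewrite /opt_reach_prob; case: o hD => /= hD.
- have [sigma0 sigma0P] := strategy_exists hP.
  apply: lt_le_trans bound_gt0 (lb_le_inf _ _).
    by exists (reach_prob P T sigma0 s), sigma0.
  move=> _ [sigma sigmaP <-].
  by apply: descending_reach_prob_ge r_s => //; apply: dist_le_Max_descending.
- have [sigma sigmaP sigma_desc] := descending_strategy_exists hP hD.
  have := descending_reach_prob_ge hP sigmaP sigma_desc r_s.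
  move/(lt_le_trans bound_gt0)/lt_le_trans; apply; apply: ub_le_sup.
    by exists 1 => _ [sigma' sigma'P <-]; apply: reach_prob_le1.
  by exists sigma.
Qed.
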